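(* Let $\overrightarrow{W}$ be a Morse sequence on a simplicial complex $K$. Then for every $p$: (1) the homology spaces $H_p(K)$ and $H_p(\widehat W)$ are isomorphic vector spaces over $\mathbb{Z}_2$; (2) the cohomology spaces $H^p(K)$ and $H^p(\widehat W)$ are isomorphic vector spaces over $\mathbb{Z}_2$.
   Context: A simplicial complex $K$ is a finite collection of non-empty finite sets closed under taking non-empty subsets; $\dim\sigma=|\sigma|-1$, $K^{(p)}$ the set of $p$-simplices. A pair $(\sigma,\tau)$ with $\sigma\subsetneq\tau$ is a free pair for $K$ if $\tau$ is the only simplex other than $\sigma$ containing $\sigma$; $K$ is then an elementary expansion of $K\setminus\{\sigma,\tau\}$. If $\nu$ is a facet (maximal simplex) of $K$, $K$ is an elementary filling of $K\setminus\{\nu\}$. A Morse sequence on $K$ is a sequence $\langle\emptyset=K_0,\dots,K_k=K\rangle$ with each $K_i$ an elementary expansion or filling of $K_{i-1}$; simplices added by fillings are critical; for an expansion $K_i=K_{i-1}\cup\{\sigma,\tau\}$, $\sigma\subset\tau$, $\sigma$ is lower regular and $\tau$ upper regular. $\widehat W$ is the set of critical simplices. $K[p]$ is the $\mathbb{Z}_2$-vector space of subsets of $K^{(p)}$ (sum = symmetric difference, $0=\emptyset$), $\widehat W[p]=\{c\in K[p]:c\subseteq\widehat W\}$. For $\sigma\in K^{(p)}$, $\partial(\sigma)=\{\tau\in K^{(p-1)}:\tau\subset\sigma\}$, $\delta(\sigma)=\{\tau\in K^{(p+1)}:\sigma\subset\tau\}$, with linear extensions $\partial_p,\delta_p$;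 $H_p(K)=\ker\partial_p/\operatorname{im}\partial_{p+1}$ and $H^p(K)=\ker\delta_p/\operatorname{im}\delta_{p-1}$ (mod 2 simplicial homology and cohomology). The reference map $\curlywedge$ is the unique map assigning to each $p$-simplex an element of $\widehat W[p]$, extended linearly, with $\curlywedge(\nu)=\{\nu\}$ for critical $\nu$ and $\curlywedge(\tau)=0=\curlywedge(\partial(\tau))$ for upper regular $\tau$; the coreference map $\curlyvee$ is the unique such map with $\curlyvee(\nu)=\{\nu\}$ for critical $\nu$ and $\curlyvee(\sigma)=0=\curlyvee(\delta(\sigma))$ for lower regular $\sigma$. The critical complex is the chain complex $(\widehat W[p],\widehat\partial_p)$ with $\widehat\partial_p(c)=\curlywedge(\partial_p(c))$, and the cocritical complex is the cochain complex $(\widehat W[p],\widehat\delta_p)$ with $\widehat\delta_p(c)=\curlyvee(\delta_p(c))$ (these satisfy $\widehat\partial\circ\widehat\partial=0$ and $\widehat\delta\circ\widehat\delta=0$). $H_p(\widehat W)=\ker\widehat\partial_p/\operatorname{im}\widehat\partial_{p+1}$ and $H^p(\widehat W)=\ker\widehat\delta_p/\operatorname{im}\widehat\delta_{p-1}$. *)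

(* Simplicial complexes on a finite vertex type V;
   simplices are nonempty sets {set V}; a p-simplex has cardinality p+1.
   Z2-chains are sets of simplices (sum = symmetric difference), as in the paper. *)
From mathcomp Require Import all_boot.
Set Implicit Arguments. Unset Strict Implicit. Unset Printing Implicit Defensive.

Section Defs.
Variable V : finType.
Notation simplex := {set V}.
Notation chainT := {set {set V}}.

Definition symd (A B : chainT) : chainT := (A :\: B) :|: (B :\: A).

Definition is_complex (K : chainT) : Prop :=
  set0 \notin K /\
  forall s t : simplex, s \in K -> t != set0 -> t \subset s -> t \in K.

(* simplices of K of cardinality n (i.e. of dimension n-1) *)
Definition Kcard (K : chainT) (n : nat) : chainT := [set s in K | #|s| == n].

Definition chain (K : chainT) (n : nat) (c : chainT) : Prop := c \subset Kcard K n.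

Definition linext (f : simplex -> chainT) (c : chainT) : chainT :=
  foldr (fun s acc => symd (f s) acc) set0 (enum c).

Definition bnd (K : chainT) (s : simplex) : chainT :=
  [set t in K | (t \proper s) && (#|t|.+1 == #|s|)].
Definition cobnd (K : chainT) (s : simplex) : chainT :=
  [set t in K | (s \proper t) && (#|s|.+1 == #|t|)].

Definition bd (K : chainT) (c : chainT) : chainT := linext (bnd K) c.
Definition cobd (K : chainT) (c : chainT) : chainT := linext (cobnd K) c.

Definition free_pair (L : chainT) (sigma tau : simplex) : Prop :=
  sigma \proper tau /\ sigma \in L /\ tau \in L /\
  forall t, t \in L -> sigma \subset t -> t = sigma \/ t = tau.

Definition elem_expansion (L L' : chainT) : Prop :=
  exists sigma tau, free_pair L' sigma tau /\ L = L' :\ sigma :\ tau.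

Definition facet (L : chainT) (nu : simplex) : Prop :=
  nu \in L /\ forall t, t \in L -> nu \subset t -> t = nu.

Definition elem_filling (L L' : chainT) : Prop :=
  exists nu, facet L' nu /\ L = L' :\ nu.

Definition morse_seq (K : chainT) (W : nat -> chainT) (k : nat) : Prop :=
  W 0 = set0 /\ W k = K /\
  forall i, i < k -> is_complex (W i.+1) /\
    (elem_expansion (W i) (W i.+1) \/ elem_filling (W i) (W i.+1)).

Definition critical (W : nat -> chainT) (k : nat) (nu : simplex) : Prop :=
  exists i, i < k /\ elem_filling (W i) (W i.+1) /\ W i = W i.+1 :\ nu /\ nu \in W i.+1.

Definition exp_pair (W : nat -> chainT) (k : nat) (sigma tau : simplex) : Prop :=
  exists i, i < k /\ free_pair (W i.+1) sigma tau /\ W i = W i.+1 :\ sigma :\ tau.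

Definition lower_regular W k (sigma : simplex) : Prop := exists tau, exp_pair W k sigma tau.
Definition upper_regular W k (tau : simplex) : Prop := exists sigma, exp_pair W k sigma tau.

Definition crit_chain (K : chainT) (W : nat -> chainT) (k n : nat) (c : chainT) : Prop :=
  chain K n c /\ forall s, s \in c -> critical W k s.

(* the reference map (characterizing properties, which determine it uniquely) *)
Definition reference_map (K : chainT) (W : nat -> chainT) (k : nat)
    (r : simplex -> chainT) : Prop :=
  (forall s, s \in K -> crit_chain K W k #|s| (r s)) /\
  (forall nu, critical W k nu -> r nu = [set nu]) /\
  (forall tau, upper_regular W k tau -> r tau = set0 /\ linext r (bnd K tau) = set0).

Definition coreference_map (K : chainT) (W : nat -> chainT) (k : nat)
    (r : simplex -> chainT) : Prop :=
  (forall s, s \in K -> crit_chain K W k #|s| (r s)) /\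
  (forall nu, critical W k nu -> r nu = [set nu]) /\
  (forall sigma, lower_regular W k sigma -> r sigma = set0 /\ linext r (cobnd K sigma) = set0).

(* cycles / boundaries of K in dimension p (simplices of cardinality p+1) *)
Definition cyclesK K p (c : chainT) : Prop := chain K p.+1 c /\ bd K c = set0.
Definition boundK K p (b : chainT) : Prop := exists d, chain K p.+2 d /\ b = bd K d.
Definition cocyclesK K p (c : chainT) : Prop := chain K p.+1 c /\ cobd K c = set0.
Definition coboundK K p (b : chainT) : Prop := exists d, chain K p d /\ b = cobd K d.

(* the critical complex: hat-partial c = curlywedge (partial c) *)
Definition cyclesW K W k r p (c : chainT) : Prop :=
  crit_chain K W k p.+1 c /\ linext r (bd K c) = set0.
Definition boundW K W k r p (b : chainT) : Prop :=
  exists d, crit_chain K W k p.+2 d /\ b = linext r (bd K d).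
(* the cocritical complex: hat-delta c = curlyvee (delta c) *)
Definition cocyclesW K W k r p (c : chainT) : Prop :=
  crit_chain K W k p.+1 c /\ linext r (cobd K c) = set0.
Definition coboundW K W k r p (b : chainT) : Prop :=
  exists d, crit_chain K W k p d /\ b = linext r (cobd K d).

(* Z1/B1 and Z2/B2 are isomorphic Z2-vector spaces: some Z2-linear map
   induces a well-defined bijection Z1/B1 -> Z2/B2. *)
Definition quot_iso (Z1 B1 Z2 B2 : chainT -> Prop) : Prop :=
  exists f : chainT -> chainT,
    (forall A B, f (symd A B) = symd (f A) (f B)) /\
    (forall z, Z1 z -> Z2 (f z)) /\
    (forall b, B1 b -> B2 (f b)) /\
    (forall z, Z1 z -> B2 (f z) -> B1 z) /\
    (forall w, Z2 w -> exists z, Z1 z /\ B2 (symd (f z) w)).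

End Defs.

From mathcomp Require Import all_boot.
From Stdlib Require Import Classical.
Set Implicit Arguments. Unset Strict Implicit. Unset Printing Implicit Defensive.

(* Each elementary expansion of a Morse sequence pairs a lower regular simplex
   with an upper regular coface of one more dimension, and the step [birth] at
   which a simplex appears makes this matching acyclic: the other facets of the
   upper simplex are born earlier and the other cofaces of the lower simplex
   later.  For such a matching, adding boundaries of upper regular simplices
   turns any chain into one without lower regular simplices, and such a chain
   whose boundary and reference image vanish is zero (look at its upper simplex
   of largest birth).  These two facts make the reference map a well-defined,
   injective and surjective map from H_p(K) to the homology of the critical
   complex.  Cohomology is the same argument for the coboundary, with the
   pairs read backwards and time reversed. *)

Section Chains.
Variable V : finType.
Implicit Types (A B c : {set {set V}}) (f h : {set V} -> {set {set V}}).

Lemma in_symd A B x : (x \in symd A B) = (x \in A) (+) (x \in B).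
Proof. by rewrite /symd !inE; case: (x \in A); case: (x \in B). Qed.

Lemma symdC A B : symd A B = symd B A.
Proof. by apply/setP => x; rewrite !in_symd addbC. Qed.

Lemma symdA A B c : symd A (symd B c) = symd (symd A B) c.
Proof. by apply/setP => x; rewrite !in_symd addbA. Qed.

Lemma symd0 A : symd A set0 = A.
Proof. by apply/setP => x; rewrite in_symd inE addbF. Qed.

Lemma symdxx A : symd A A = set0.
Proof. by apply/setP => x; rewrite in_symd inE addbb. Qed.

Lemma symdK A B : symd (symd A B) B = A.
Proof. by rewrite -symdA symdxx symd0. Qed.

Lemma symd_eq0 A B : symd A B = set0 -> A = B.
Proof. by move=> AB0; rewrite -(symdK A B) AB0 symdC symd0. Qed.

Lemma symd_subU A B : symd A B \subset A :|: B.
Proof. by apply/subsetP => x; rewrite in_symd !inE; case: (x \in A). Qed.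

Lemma symd_subset A B (P : {set {set V}}) : A \subset P -> B \subset P -> symd A B \subset P.
Proof. by move=> AP BP; apply: subset_trans (symd_subU A B) _; rewrite subUset AP. Qed.

Lemma in_linext f c x : (x \in linext f c) = \big[addb/false]_(s in c) (x \in f s).
Proof.
rewrite /linext -big_enum /=; elim: (enum c) => [|s l IH] /=.
  by rewrite big_nil inE.
by rewrite big_cons in_symd IH.
Qed.

Lemma in_linext_odd f c x : (x \in linext f c) = odd #|[set s in c | x \in f s]|.
Proof.
rewrite in_linext (bigID (fun s => x \in f s)) /= [X in _ (+) X]big1 ?addbF.
  rewrite (eq_bigr (fun=> true)) => [|s /andP[] //].
  by rewrite big_const cardsE; elim: #|_| => //= n ->; case: (odd n).
by move=> s /andP[_ /negbTE].
Qed.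

Lemma linext_witness f c x : x \in linext f c -> exists2 s, s \in c & x \in f s.
Proof.
rewrite in_linext_odd; case: (set_0Vmem [set s in c | x \in f s]) => [-> | [s]].
  by rewrite cards0.
by rewrite inE => /andP[sc xfs] _; exists s.
Qed.

Lemma linext_subset f c (P : {set {set V}}) :
  (forall s, s \in c -> f s \subset P) -> linext f c \subset P.
Proof.
move=> fP; apply/subsetP => x /linext_witness[s sc xfs].
exact: subsetP (fP s sc) x xfs.
Qed.

Lemma linext_zero_on f c : (forall s, s \in c -> f s = set0) -> linext f c = set0.
Proof. by move=> f0; apply/eqP; rewrite -subset0; apply: linext_subset => s /f0 ->. Qed.

Lemma linext0 f : linext f set0 = set0.
Proof. by apply: linext_zero_on => s; rewrite inE. Qed.

Lemma linext_set1 f s : linext f [set s] = f s.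
Proof. by apply/setP => x; rewrite in_linext big_set1. Qed.

Lemma eq_linext f h c : (forall s, s \in c -> f s = h s) -> linext f c = linext h c.
Proof. by move=> fh; apply/setP => x; rewrite !in_linext; apply: eq_bigr => s /fh ->. Qed.

Lemma linext_id f c : (forall s, s \in c -> f s = [set s]) -> linext f c = c.
Proof.
move=> f1; rewrite (eq_linext f1); apply/setP => x; rewrite in_linext_odd.
case xc: (x \in c).
  rewrite (_ : [set s in c | x \in [set s]] = [set x]) ?cards1 //.
  by apply/setP => s; rewrite !inE eq_sym; apply/andb_idl => /eqP ->.
rewrite (_ : [set s in c | x \in [set s]] = set0) ?cards0 //.
by apply/setP => s; rewrite !inE eq_sym; case: eqP => [->|_]; rewrite ?xc ?andbF.
Qed.

Lemma linext_symd f A B : linext f (symd A B) = symd (linext f A) (linext f B).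
Proof.
apply/setP => x; rewrite in_symd !in_linext.
rewrite big_mkcond [X in _ (+) X]big_mkcond [X in X (+) _]big_mkcond -big_split /=.
by apply: eq_bigr => s _; rewrite in_symd; case: (s \in A); case: (s \in B); case: (x \in f s).
Qed.

Lemma linext_comp f h c : linext f (linext h c) = linext (fun s => linext f (h s)) c.
Proof.
apply/setP => x; rewrite in_linext big_mkcond /=.
under eq_bigr => t _ do rewrite -[if _ then _ else _]/(_ && _) in_linext big_distrl.
rewrite exchange_big /= in_linext; apply: eq_bigr => s _.
by rewrite in_linext [RHS]big_mkcond.
Qed.

End Chains.

Section AcyclicMatching.
Variable V : finType.
Notation S := {set V}.
Variables (K : {set S}) (D r : S -> {set S}) (g : S -> nat) (up sh : nat -> nat).
Variables (crit : S -> Prop) (pr : S -> S -> Prop) (T : S -> nat).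

(* A graded Z2-complex with basis [K] and differential [D], together with a matching
   [pr a b] of lower elements [a] with upper elements [b]: [D] shifts the grade by
   [sh] and a pair by [up].  [T] witnesses acyclicity: in the boundary of [b] the
   partner [a] comes last, and [b] comes first among the cofaces of [a]. *)
Hypothesis D_subK : forall s, D s \subset K.
Hypothesis DD0 : forall s, s \in K -> linext D (D s) = set0.
Hypothesis D_grade : forall s x, s \in K -> x \in D s -> g x = sh (g s).
Hypothesis K_trichotomy :
  forall s, s \in K -> crit s \/ (exists b, pr s b) \/ (exists a, pr a s).
Hypothesis r_crit : forall s, crit s -> r s = [set s].
Hypothesis r_upper : forall a b, pr a b -> r b = set0 /\ linext r (D b) = set0.
Hypothesis r_graded : forall s, s \in K ->
  r s \subset [set x in K | g x == g s] /\ forall x, x \in r s -> crit x.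
Hypothesis pr_K : forall a b, pr a b -> a \in K /\ b \in K.
Hypothesis pr_D : forall a b, pr a b -> a \in D b.
Hypothesis pr_grade : forall a b, pr a b -> g b = up (g a).
Hypothesis pr_T : forall a b, pr a b -> T a = T b.
Hypothesis pr_D_lt : forall a b x, pr a b -> x \in D b -> x != a -> T x < T a.
Hypothesis pr_cofaces : forall a b y, pr a b -> y \in K -> a \in D y -> y = b \/ T a < T y.
Hypothesis pr_inj : forall a b a' b', pr a b -> pr a' b' -> T a = T a' -> a = a' /\ b = b'.

Implicit Types (c d e w x y z : {set S}) (a b s : S) (j : nat).

Local Notation graded j := [set s in K | g s == j].

Definition lower_free (x : {set S}) := forall s, s \in x -> ~ exists b, pr s b.

Definition upper_chain j (e : {set S}) := forall b, b \in e -> exists2 a, pr a b & g a = j.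

Lemma graded_subK j c : c \subset graded j -> c \subset K.
Proof. by move=> /subset_trans; apply; apply/subsetP => s; rewrite inE => /andP[]. Qed.

Lemma linext_D_subK c : linext D c \subset K.
Proof. exact: linext_subset. Qed.

Lemma linext_DD c : c \subset K -> linext D (linext D c) = set0.
Proof. by move=> /subsetP cK; rewrite linext_comp; apply: linext_zero_on => s /cK /DD0. Qed.

Lemma linext_D_graded j c : c \subset graded j -> linext D c \subset graded (sh j).
Proof.
move=> /subsetP cj; apply: linext_subset => s /cj; rewrite inE => /andP[sK /eqP <-].
by apply/subsetP => x xDs; rewrite inE (subsetP (D_subK s)) // (D_grade sK xDs) /=.
Qed.

Lemma D_upper_graded a b : pr a b -> D b \subset graded (g a).
Proof.
move=> ab; have bK := (pr_K ab).2; apply/subsetP => x xDb.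
by rewrite inE (subsetP (D_subK b)) // (D_grade bK xDb) -(D_grade bK (pr_D ab)) /=.
Qed.

Lemma upper_chain_graded j e : upper_chain j e -> e \subset graded (up j).
Proof.
by move=> ej; apply/subsetP => b /ej[a ab <-]; rewrite inE (pr_K ab).2 (pr_grade ab) /=.
Qed.

Lemma upper_chain_symd j e e' : upper_chain j e -> upper_chain j e' -> upper_chain j (symd e e').
Proof. by move=> ej e'j b /(subsetP (symd_subU e e')); rewrite inE => /orP[/ej | /e'j]. Qed.

Lemma r_upper_chain j e : upper_chain j e -> linext r e = set0.
Proof. by move=> ej; apply: linext_zero_on => b /ej[a /r_upper[]]. Qed.

Lemma rD_upper_chain j e : upper_chain j e -> linext r (linext D e) = set0.
Proof. by move=> ej; rewrite linext_comp; apply: linext_zero_on => b /ej[a /r_upper[]]. Qed.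

Lemma lower_free_symd x y : lower_free x -> lower_free y -> lower_free (symd x y).
Proof. by move=> xl yl s /(subsetP (symd_subU x y)); rewrite inE => /orP[/xl | /yl]. Qed.

Lemma r_lower_free_crit x s :
  x \subset K -> lower_free x -> s \in x -> crit s -> s \in linext r x.
Proof.
move=> /subsetP xK xl sx sc; rewrite in_linext (bigD1 s) //= r_crit // inE eqxx /=.
rewrite big1 // => t /andP[tx ts]; case: (K_trichotomy (xK t tx)) => [tc | [tl | [a pat]]].
- by rewrite r_crit // inE eq_sym (negbTE ts).
- by case: (xl t tx).
- by rewrite (r_upper pat).1 inE.
Qed.

(* An upper element of maximal [T] in [x] is the only coface in [x] of its partner. *)
Lemma lower_free_eq0 x :
  x \subset K -> lower_free x -> linext r x = set0 -> linext D x = set0 -> x = set0.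
Proof.
move=> xK xl rx0 Dx0; apply/eqP; rewrite -subset0; apply/subsetP => b0 b0x.
have [b bx bmax] := @arg_maxnP _ b0 (mem x) T b0x.
have [a ab] : exists a, pr a b.
  case: (K_trichotomy (subsetP xK b bx)) => [bc | [bl | //]]; last by case: (xl b bx).
  by have := r_lower_free_crit xK xl bx bc; rewrite rx0 inE.
suff : a \in linext D x by rewrite Dx0 inE.
rewrite in_linext (bigD1 b) //= pr_D //= big1 // => y /andP[yx yb].
apply/negP => aDy; have [yb' | Tay] := pr_cofaces ab (subsetP xK y yx) aDy.
  by rewrite yb' eqxx in yb.
by have := leq_trans Tay (bmax y yx); rewrite (pr_T ab) ltnn.
Qed.

(* Adding the boundary of the partner of the lower element with largest [T]
   removes that element and only brings in elements with smaller [T]. *)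
Lemma reduce_lower_step j N c :
  c \subset graded j -> (forall s b, s \in c -> pr s b -> T s < N.+1) ->
  exists e, [/\ upper_chain j e, symd c (linext D e) \subset graded j &
             forall s b, s \in symd c (linext D e) -> pr s b -> T s < N].
Proof.
move=> cj cN.
have [[a [b [ac ab TaN]]] | noN] :=
  classic (exists a b, [/\ a \in c, pr a b & T a = N]); last first.
  exists set0; rewrite linext0 symd0; split => // [b|s b sc sb]; first by rewrite inE.
  have := cN s b sc sb; rewrite ltnS leq_eqVlt => /orP[/eqP TsN | //].
  by case: noN; exists s, b.
have aj : g a = j by move: (subsetP cj a ac); rewrite inE => /andP[_ /eqP].
exists [set b]; rewrite linext_set1; split.
- by move=> b'; rewrite inE => /eqP ->; exists a.
- by apply: symd_subset => //; rewrite -aj; apply: D_upper_graded.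
- move=> s b' + sb'; rewrite in_symd; case: (boolP (s \in D b)) => sDb; rewrite ?addbT ?addbF => sc.
    have sa : s != a by apply: contraNneq sc => ->.
    by rewrite -TaN (pr_D_lt ab sDb sa).
  have := cN s b' sc sb'; rewrite ltnS leq_eqVlt => /orP[/eqP TsN | //].
  have [sa _] := pr_inj sb' ab (etrans TsN (esym TaN)).
  by rewrite sa (pr_D ab) in sDb.
Qed.

Lemma reduce_lower_below j N c :
  c \subset graded j -> (forall s b, s \in c -> pr s b -> T s < N) ->
  exists e, upper_chain j e /\ lower_free (symd c (linext D e)).
Proof.
elim: N c => [|N IH] c cj cN.
  exists set0; rewrite linext0 symd0; split => [b|s sc [b sb]]; first by rewrite inE.
  by have := cN s b sc sb.
have [e1 [e1j c1j c1N]] := reduce_lower_step cj cN.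
have [e2 [e2j c2l]] := IH _ c1j c1N.
exists (symd e1 e2); split; first exact: upper_chain_symd.
by rewrite linext_symd symdA.
Qed.

Lemma reduce_lower j c :
  c \subset graded j -> exists e, upper_chain j e /\ lower_free (symd c (linext D e)).
Proof.
move=> cj; apply: (reduce_lower_below (N := (\max_s T s).+1) cj) => s b _ _.
by rewrite ltnS leq_bigmax.
Qed.

Lemma rD_rDr_lower_free x :
  x \subset K -> lower_free x -> linext r (linext D x) = linext r (linext D (linext r x)).
Proof.
move=> /subsetP xK xl; rewrite !linext_comp; apply: eq_linext => s sx.
case: (K_trichotomy (xK s sx)) => [sc | [sl | [a pas]]].
- by rewrite r_crit // linext_set1.
- by case: (xl s sx).
- by rewrite (r_upper pas).1 (r_upper pas).2 linext0.
Qed.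

Lemma rD_rDr j c : c \subset graded j -> linext r (linext D c) = linext r (linext D (linext r c)).
Proof.
move=> cj; have [e [ej xl]] := reduce_lower cj.
have eK := graded_subK (upper_chain_graded ej).
have xK : symd c (linext D e) \subset K.
  by apply: symd_subset (graded_subK cj) (linext_D_subK e).
move: (symd c (linext D e)) (symdK c (linext D e)) xl xK => x <-{c cj} xl xK.
rewrite !linext_symd (linext_DD eK) (rD_upper_chain ej) !linext0 !symd0.
exact: rD_rDr_lower_free.
Qed.

Lemma r_graded_crit j c :
  c \subset graded j -> linext r c \subset graded j /\ forall s, s \in linext r c -> crit s.
Proof.
move=> /subsetP cj; split.
  apply: linext_subset => s /cj; rewrite inE => /andP[sK /eqP <-]; exact: (r_graded sK).1.
by move=> x /linext_witness[s /cj]; rewrite inE => /andP[sK _]; apply: (r_graded sK).2.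
Qed.

Lemma r_crit_chain c : (forall s, s \in c -> crit s) -> linext r c = c.
Proof. by move=> cc; apply: linext_id => s /cc /r_crit. Qed.

Lemma r_cycle j z : z \subset graded j -> linext D z = set0 ->
  (linext r z \subset graded j /\ forall s, s \in linext r z -> crit s) /\
  linext r (linext D (linext r z)) = set0.
Proof. by move=> zj Dz0; split; [apply: r_graded_crit | rewrite -(rD_rDr zj) Dz0 linext0]. Qed.

Lemma r_boundary j d : d \subset graded j ->
  exists2 c : {set S}, c \subset graded j /\ (forall s, s \in c -> crit s) &
              linext r (linext D d) = linext r (linext D c).
Proof. by move=> dj; exists (linext r d); [apply: r_graded_crit | apply: rD_rDr dj]. Qed.

Lemma boundary_of_r_boundary j z d : sh (up j) = j ->
  z \subset graded j -> linext D z = set0 -> d \subset graded (up j) ->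
  linext r z = linext r (linext D d) ->
  exists2 c : {set S}, c \subset graded (up j) & z = linext D c.
Proof.
move=> shup zj Dz0 dj rz.
have Ddj : linext D d \subset graded j by rewrite -[in X in graded X]shup; apply: linext_D_graded.
have [e1 [e1j x1l]] := reduce_lower zj.
have [e2 [e2j x2l]] := reduce_lower Ddj.
have e1K := graded_subK (upper_chain_graded e1j).
have e2K := graded_subK (upper_chain_graded e2j).
suff /symd_eq0 x12 : symd (symd z (linext D e1)) (symd (linext D d) (linext D e2)) = set0.
  exists (symd (symd d e2) e1).
    by do 2?apply: symd_subset => //; apply: upper_chain_graded.
  by rewrite !linext_symd -x12 symdK.
apply: lower_free_eq0; last 3 first.
- exact: lower_free_symd.
- by rewrite !linext_symd (rD_upper_chain e1j) (rD_upper_chain e2j) !symd0 rz symdxx.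
- by rewrite !linext_symd Dz0 (linext_DD e1K) (linext_DD (graded_subK dj)) (linext_DD e2K) !symd0.
by do 3?apply: symd_subset; rewrite ?(graded_subK zj) ?linext_D_subK.
Qed.

Lemma cycle_of_crit_cycle j w : up (sh j) = j ->
  w \subset graded j -> (forall s, s \in w -> crit s) -> linext r (linext D w) = set0 ->
  exists2 z : {set S}, z \subset graded j /\ linext D z = set0 & linext r z = w.
Proof.
move=> upsh wj wc rDw0.
have [e [ej xl]] := reduce_lower (linext_D_graded wj).
have eK := graded_subK (upper_chain_graded ej).
have x0 : symd (linext D w) (linext D e) = set0.
  apply: lower_free_eq0 => //.
  - by apply: symd_subset; apply: linext_D_subK.
  - by rewrite linext_symd (rD_upper_chain ej) rDw0 symd0.
  - by rewrite linext_symd (linext_DD (graded_subK wj)) (linext_DD eK) symd0.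
exists (symd w e); last by rewrite linext_symd (r_upper_chain ej) symd0 r_crit_chain.
split; last by rewrite linext_symd.
by apply: symd_subset => //; rewrite -[in X in graded X]upsh; apply: upper_chain_graded.
Qed.

Theorem matching_quot_iso n : sh (up n) = n -> up (sh n) = n ->
  quot_iso (fun c => c \subset graded n /\ linext D c = set0)
           (fun y => exists d, d \subset graded (up n) /\ y = linext D d)
           (fun c => (c \subset graded n /\ forall s, s \in c -> crit s) /\
                     linext r (linext D c) = set0)
           (fun y => exists d, (d \subset graded (up n) /\ forall s, s \in d -> crit s) /\
                     y = linext r (linext D d)).
Proof.
move=> shup upsh; exists (linext r); split; [|split; [|split; [|split]]].
- exact: linext_symd.
- by move=> z [zn Dz0]; apply: r_cycle.
- by move=> _ [d [dn ->]]; have [d' ? ?] := r_boundary dn; exists d'.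
- move=> z [zn Dz0] [d [[dn _] rz]].
  by have [d0 ? ?] := boundary_of_r_boundary shup zn Dz0 dn rz; exists d0.
- move=> w [[wn wc] rDw0]; have [z ? rz] := cycle_of_crit_cycle upsh wn wc rDw0.
  exists z; split => //; exists set0; split; first by split => [|s]; rewrite ?sub0set ?inE.
  by rewrite rz symdxx !linext0.
Qed.

End AcyclicMatching.

Section Faces.
Variable V : finType.
Notation S := {set V}.
Implicit Types (K : {set S}) (s t u w x : S).

Local Notation facet_of a b := ((a \proper b) && (#|a|.+1 == #|b|)).

Lemma bnd_subK K s : bnd K s \subset K.
Proof. by rewrite /bnd setIdE subsetIl. Qed.

Lemma cobnd_subK K s : cobnd K s \subset K.
Proof. by rewrite /cobnd setIdE subsetIl. Qed.

Lemma card_bnd K s x : x \in bnd K s -> #|x|.+1 = #|s|.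
Proof. by rewrite inE => /and3P[_ _ /eqP]. Qed.

Lemma card_cobnd K s x : x \in cobnd K s -> #|s|.+1 = #|x|.
Proof. by rewrite inE => /and3P[_ _ /eqP]. Qed.

Lemma card_between_even u w : ~~ odd #|[set t : S | facet_of u t && facet_of t w]|.
Proof.
set M := [set t | _]; have [-> | [t0]] := set_0Vmem M; first by rewrite cards0.
rewrite inE => /andP[/andP[ut0 /eqP ut0c] /andP[t0w /eqP t0wc]].
have uw : u \subset w := subset_trans (proper_sub ut0) (proper_sub t0w).
have -> : M = [set v |: u | v in w :\: u].
  apply/setP => t; apply/idP/imsetP => [|[v]].
    rewrite inE => /andP[/andP[ut /eqP utc] /andP[tw _]].
    have [usub [v vt vu]] := properP ut.
    exists v; first by rewrite inE vu (subsetP (proper_sub tw)).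
    by apply/eqP; rewrite eq_sym eqEcard subUset sub1set vt usub cardsU1 vu -utc /=.
  rewrite inE => /andP[vu vw] ->; rewrite inE !properEcard subsetUr subUset sub1set vw uw.
  by rewrite cardsU1 vu -t0wc -ut0c !eqxx !ltnSn.
rewrite card_in_imset; first by rewrite (cardsDS uw) -t0wc -ut0c -addn2 addKn.
move=> v v'; rewrite !inE => /andP[vu _] /andP[v'u _] vv'.
by have := setU11 v u; rewrite vv' !inE (negbTE vu) orbF => /eqP.
Qed.

Lemma faces_between_in K u w : is_complex K -> w \in K ->
  [set t in K | facet_of u t && facet_of t w] = [set t : S | facet_of u t && facet_of t w].
Proof.
move=> [_ Kfaces] wK; apply/setP => t; rewrite !inE.
apply/andb_idl => /andP[/andP[ut _] /andP[tw _]].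
apply: Kfaces wK _ (proper_sub tw); apply/set0Pn.
by have [_ [v vt _]] := properP ut; exists v.
Qed.

Lemma bnd_bnd K s : is_complex K -> s \in K -> bd K (bnd K s) = set0.
Proof.
move=> Kc sK; apply/setP => x; rewrite in_linext_odd inE.
case xK: (x \in K).
  rewrite (_ : [set t in bnd K s | x \in bnd K t] =
               [set t in K | facet_of x t && facet_of t s]).
    by rewrite faces_between_in // (negbTE (card_between_even _ _)).
  by apply/setP => t; rewrite !inE xK; case: (t \in K) => //=; rewrite andbC.
rewrite (_ : [set t in bnd K s | x \in bnd K t] = set0) ?cards0 //.
by apply/setP => t; rewrite !inE xK andbF.
Qed.

Lemma cobnd_cobnd K s : is_complex K -> cobd K (cobnd K s) = set0.
Proof.
move=> Kc; apply/setP => x; rewrite in_linext_odd inE.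
case xK: (x \in K).
  rewrite (_ : [set t in cobnd K s | x \in cobnd K t] =
               [set t in K | facet_of s t && facet_of t x]).
    by rewrite faces_between_in // (negbTE (card_between_even _ _)).
  by apply/setP => t; rewrite !inE xK; case: (t \in K).
rewrite (_ : [set t in cobnd K s | x \in cobnd K t] = set0) ?cards0 //.
by apply/setP => t; rewrite !inE xK andbF.
Qed.

End Faces.

Section MorseSequence.
Variable V : finType.
Notation S := {set V}.
Variables (K : {set S}) (W : nat -> {set S}) (k : nat).
Hypothesis K_complex : is_complex K.
Hypothesis W_morse : morse_seq K W k.
Implicit Types (a b s x y : S) (i j : nat).

Lemma W_subS i : i < k -> W i \subset W i.+1.
Proof.
have [_ [_ steps]] := W_morse; move=> /steps[_ [[a [b [_ ->]]] | [nu [_ ->]]]].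
  exact: subset_trans (subD1set _ _) (subD1set _ _).
exact: subD1set.
Qed.

Lemma W_mono i j : i <= j -> j <= k -> W i \subset W j.
Proof.
elim: j => [|j IH]; first by rewrite leqn0 => /eqP ->.
rewrite leq_eqVlt => /orP[/eqP -> // | ij] jk.
exact: subset_trans (IH ij (ltnW jk)) (W_subS jk).
Qed.

Lemma W_subK i : i <= k -> W i \subset K.
Proof. by have [_ [<- _]] := W_morse; move/W_mono; apply. Qed.

Lemma W_complex i : i <= k -> is_complex (W i).
Proof.
have [W0 [_ steps]] := W_morse; case: i => [_ | i /steps[] //].
by rewrite W0; split => [|s t]; rewrite inE.
Qed.

Definition birth s := count (fun j => s \notin W j.+1) (iota 0 k).

Lemma birth_eq s i : i < k -> s \notin W i -> s \in W i.+1 -> birth s = i.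
Proof.
move=> ik sWi sWi1; have ik' := ltnW ik.
rewrite /birth -(subnKC ik') iotaD count_cat add0n.
rewrite (eq_in_count (a2 := predT)) ?count_predT ?size_iota; last first.
  move=> j; rewrite mem_iota add0n => /andP[_ ji] /=.
  by apply: contra sWi; apply: subsetP; apply: W_mono.
rewrite (eq_in_count (a2 := pred0)) ?count_pred0 ?addn0 // => j.
rewrite mem_iota (subnKC ik') => /andP[ij jk] /=.
by rewrite (subsetP (@W_mono i.+1 j.+1 ij jk)).
Qed.

Lemma exists_birth s : s \in K -> exists2 i, i < k & s \notin W i /\ s \in W i.+1.
Proof.
have [W0 [Wk _]] := W_morse; rewrite -Wk.
have : s \notin W 0 by rewrite W0 inE.
elim: {-2}k (leqnn k) => [|n IH] nk sW0 sWn; first by rewrite sWn in sW0.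
case sWn': (s \in W n); last by exists n; last by rewrite sWn'.
by have [i ik sWi] := IH (ltnW nk) sW0 sWn'; exists i; first exact: ltnW.
Qed.

Lemma mem_W_birth s j : s \in K -> j <= k -> (s \in W j) = (birth s < j).
Proof.
move=> /exists_birth[i ik [sWi sWi1]] jk; rewrite (birth_eq ik sWi sWi1).
apply/idP/idP => [sWj | ij]; last exact: subsetP (W_mono ij jk) s sWi1.
by rewrite ltnNge; apply: contra sWi => ji; apply: (subsetP (W_mono ji (ltnW ik))).
Qed.

Lemma birth_ltk s : s \in K -> birth s < k.
Proof. by move=> sK; rewrite -mem_W_birth //; have [_ [->]] := W_morse. Qed.

Lemma free_pair_card L a b : is_complex L -> free_pair L a b -> #|b| = #|a|.+1.
Proof.
move=> [_ Lfaces] [ab [aL [bL free]]]; have [asub [v vb va]] := properP ab.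
have vaL : v |: a \in L.
  by apply: Lfaces bL _ _; [apply/set0Pn; exists v; rewrite setU11 | rewrite subUset sub1set vb].
have [va_a | <-] := free _ vaL (subsetUr _ _); last by rewrite cardsU1 va.
by move: va; rewrite -va_a setU11.
Qed.

Lemma exp_pair_step a b : exp_pair W k a b -> exists2 i, i < k &
  [/\ free_pair (W i.+1) a b, W i = W i.+1 :\ a :\ b, birth a = i & birth b = i].
Proof.
move=> [i [ik [fp Wi]]]; exists i => //; have [_ [aW [bW _]]] := fp.
by split => //; apply: birth_eq; rewrite // Wi !inE eqxx ?andbF.
Qed.

Lemma exp_pair_K a b : exp_pair W k a b -> a \in K /\ b \in K.
Proof. by move=> [i [ik [[_ [aW [bW _]]] _]]]; rewrite !(subsetP (W_subK ik)). Qed.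

Lemma exp_pair_card a b : exp_pair W k a b -> #|b| = #|a|.+1.
Proof. by move=> [i [ik [fp _]]]; apply: free_pair_card fp; apply: W_complex. Qed.

Lemma exp_pair_birth a b : exp_pair W k a b -> birth a = birth b.
Proof. by move=> /exp_pair_step[i _ [_ _ -> ->]]. Qed.

Lemma K_trichotomy s : s \in K ->
  critical W k s \/ (exists b, exp_pair W k s b) \/ (exists a, exp_pair W k a s).
Proof.
move=> /exists_birth[i ik [sWi sWi1]]; have [_ [_ steps]] := W_morse.
have [_ [[a [b [fp Wi]]] | [nu [fct Wi]]]] := steps i ik; move: sWi; rewrite Wi !inE sWi1 andbT.
  rewrite negb_and !negbK => /orP[/eqP-> | /eqP->]; right.
  - by right; exists a, i.
  - by left; exists b, i.
rewrite negbK => /eqP sn; left; exists i; split=> //; split; first by exists nu.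
by subst nu.
Qed.

Lemma exp_pair_inj a b a' b' :
  exp_pair W k a b -> exp_pair W k a' b' -> birth a = birth a' -> a = a' /\ b = b'.
Proof.
move=> /exp_pair_step[i ik [[ab [aW [bW _]]] Wi ai _]].
move=> /exp_pair_step[i' _ [[ab' _] Wi' ai' _]] aa'.
have ii' : i' = i by rewrite -ai' -aa'.
rewrite {}ii' in Wi'.
have : a \notin W i /\ b \notin W i by rewrite Wi !inE !eqxx andbF.
rewrite Wi' !inE aW bW !andbT !negb_and !negbK.
move=> -[/orP[/eqP a_b' | /eqP a_a'] /orP[/eqP b_b' | /eqP b_a']].
- by move: ab; rewrite a_b' b_b' properxx.
- by move: ab'; rewrite -b_a' -a_b' => /(proper_trans ab); rewrite properxx.
- by [].
- by move: ab; rewrite a_a' b_a' properxx.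
Qed.

Lemma K_neq0 s : s \in K -> s != set0.
Proof. by apply: contraTneq => ->; apply: K_complex.1. Qed.

Lemma exp_pair_proper a b : exp_pair W k a b -> a \proper b.
Proof. by move=> [i [_ [[]]]]. Qed.

Lemma exp_pair_bnd a b : exp_pair W k a b -> a \in bnd K b.
Proof. by move=> ab; rewrite inE (exp_pair_K ab).1 (exp_pair_proper ab) (exp_pair_card ab) /=. Qed.

Lemma exp_pair_cobnd a b : exp_pair W k a b -> b \in cobnd K a.
Proof. by move=> ab; rewrite inE (exp_pair_K ab).2 (exp_pair_proper ab) (exp_pair_card ab) /=. Qed.

Lemma bnd_birth_lt a b x : exp_pair W k a b -> x \in bnd K b -> x != a -> birth x < birth a.
Proof.
move=> ab; rewrite inE => /andP[xK /andP[xb _]] xa.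
have [i ik [[_ [_ [bW _]]] Wi ai _]] := exp_pair_step ab.
have xW : x \in W i.+1 := (W_complex ik).2 b x bW (K_neq0 xK) (proper_sub xb).
have xWi : x \in W i by rewrite Wi !inE xa xW proper_neq.
by rewrite ai -(mem_W_birth xK (ltnW ik)).
Qed.

Lemma bnd_cofaces a b y :
  exp_pair W k a b -> y \in K -> a \in bnd K y -> y = b \/ birth a < birth y.
Proof.
move=> ab yK; rewrite inE => /andP[_ /andP[ay _]].
have [i ik [[_ [_ [_ free]]] _ ai _]] := exp_pair_step ab.
case yW: (y \in W i.+1).
  by case: (free y yW (proper_sub ay)) => [ya | ]; [rewrite ya properxx in ay | left].
by right; rewrite ai ltnNge -ltnS -(mem_W_birth yK ik) yW.
Qed.

Lemma cobnd_birth_gt a b x : exp_pair W k a b -> x \in cobnd K a -> x != b -> birth b < birth x.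
Proof.
move=> ab; rewrite inE => /andP[xK /andP[ax _]] xb.
have [i ik [[_ [_ [_ free]]] _ _ bi]] := exp_pair_step ab.
have xW : x \notin W i.+1.
  apply/negP => /free /(_ (proper_sub ax)) [xa | /eqP]; first by rewrite xa properxx in ax.
  exact/negP.
by rewrite bi ltnNge -ltnS -(mem_W_birth xK ik) (negbTE xW).
Qed.

Lemma cobnd_faces a b y :
  exp_pair W k a b -> y \in K -> b \in cobnd K y -> y = a \/ birth y < birth b.
Proof.
move=> ab yK; rewrite inE => /andP[_ /andP[yb _]].
have [i ik [[_ [_ [bW _]]] Wi _ bi]] := exp_pair_step ab.
have [-> | ya] := eqVneq y a; [by left | right].
have yW : y \in W i.+1 := (W_complex ik).2 b y bW (K_neq0 yK) (proper_sub yb).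
have yWi : y \in W i by rewrite Wi !inE ya yW proper_neq.
by rewrite bi -(mem_W_birth yK (ltnW ik)).
Qed.

Lemma homology_iso r p : reference_map K W k r ->
  quot_iso (cyclesK K p) (boundK K p) (cyclesW K W k r p) (boundW K W k r p).
Proof.
move=> [r_graded [r_crit r_upper]].
apply: (matching_quot_iso (D := bnd K) (g := fun s => #|s|) (up := succn) (sh := predn)
  (pr := exp_pair W k) (T := birth)) => //.
- exact: bnd_subK.
- by move=> s; apply: bnd_bnd.
- by move=> s x _ /card_bnd <-.
- exact: K_trichotomy.
- by move=> a b ab; apply: r_upper; exists a.
- exact: exp_pair_K.
- exact: exp_pair_bnd.
- exact: exp_pair_card.
- exact: exp_pair_birth.
- exact: bnd_birth_lt.
- exact: bnd_cofaces.
- exact: exp_pair_inj.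
Qed.

Lemma cohomology_iso r p : coreference_map K W k r ->
  quot_iso (cocyclesK K p) (coboundK K p) (cocyclesW K W k r p) (coboundW K W k r p).
Proof.
move=> [r_graded [r_crit r_lower]].
have birth_K s : s \in K -> birth s <= k by move/birth_ltk/ltnW.
(* The coboundary reverses the matching, so the acyclicity witness runs backwards in time. *)
apply: (matching_quot_iso (D := cobnd K) (g := fun s => #|s|) (up := predn) (sh := succn)
  (pr := fun a b => exp_pair W k b a) (T := fun s => k - birth s)) => //.
- exact: cobnd_subK.
- by move=> s _; apply: cobnd_cobnd.
- by move=> s x _ /card_cobnd <-.
- by move=> s /K_trichotomy[| []]; auto.
- by move=> a b ba; apply: r_lower; exists a.
- by move=> a b /exp_pair_K[].
- by move=> a b /exp_pair_cobnd.
- by move=> a b /exp_pair_card ->.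
- by move=> a b /exp_pair_birth ->.
- move=> a b x ba xa xb; apply: ltn_sub2l (cobnd_birth_gt ba xa xb).
  by apply: birth_ltk; case: (exp_pair_K ba).
- move=> a b y ba yK ay; have [-> | yb] := cobnd_faces ba yK ay; [by left | right].
  exact: ltn_sub2l (birth_ltk yK) yb.
- move=> a b a' b' ba b'a' e.
  have [[_ aK] [_ a'K]] := (exp_pair_K ba, exp_pair_K b'a').
  have aa' : birth a = birth a'.
    by apply/eqP; rewrite -(eqn_sub2lE (birth_K _ aK) (birth_K _ a'K)) e.
  have bb' : birth b = birth b' by rewrite (exp_pair_birth ba) (exp_pair_birth b'a').
  by have [-> ->] := exp_pair_inj ba b'a' bb'.
Qed.

End MorseSequence.

Theorem theorem10 (V : finType) (K : {set {set V}}) (W : nat -> {set {set V}})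
    (k : nat) (r cr : {set V} -> {set {set V}}) :
  is_complex K -> morse_seq K W k ->
  reference_map K W k r -> coreference_map K W k cr ->
  forall p : nat,
    quot_iso (cyclesK K p) (boundK K p) (cyclesW K W k r p) (boundW K W k r p) /\
    quot_iso (cocyclesK K p) (coboundK K p)
             (cocyclesW K W k cr p) (coboundW K W k cr p).
Proof.
move=> K_complex W_morse r_ref cr_coref p.
by split; [apply: homology_iso | apply: cohomology_iso].
Qed.
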